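(* Let $D=(V,A)$ be a directed graph and let $R_D$ be an inclusion-wise minimal bad set of $D$. Let $D'=(V',A')$ where $V'=V\cup\{r_1,r_2\}$ with $r_1,r_2$ new vertices and $A'=A\cup\{(r_1,r_2)\}\cup\{(v,r_1),(r_2,v)\mid v\in R_D\}$. Then $n(D')=n(D)+2$, $f(D')=f(D)+1$, and $\{r_1,r_2\}$ is an inclusion-wise minimal bad set of $D'$.
   Context: Directed graphs are oriented graphs: finite, no loops, no multiple arcs and no pair of antiparallel arcs. $n(H)$ is the number of vertices and $f(H)$ is the minimum size of a set $F\subseteq V(H)$ such that $H-F$ contains no directed cycle. A set $R\subseteq V(H)$ is bad if it is not contained in any minimum feedback vertex set of $H$; it is an inclusion-wise minimal bad set if no proper subset of it is bad. *)

From mathcomp Require Import all_boot.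
Set Implicit Arguments. Unset Strict Implicit. Unset Printing Implicit Defensive.

(* A directed graph on a finite vertex type T is an arc relation e : rel T
   (e u v = there is an arc (u,v)).  Oriented: no loops, no antiparallel pairs. *)
Definition oriented (T : finType) (e : rel T) : Prop :=
  (forall x, ~~ e x x) /\ (forall x y, e x y -> ~~ e y x).

Definition nverts (T : finType) (e : rel T) : nat := #|T|.

Definition dicycle (T : finType) (e : rel T) (S : {set T}) (c : seq T) : bool :=
  [&& c != [::], uniq c, all (fun x => x \in S) c & cycle e c].

Definition is_fvs (T : finType) (e : rel T) (F : {set T}) : Prop :=
  forall c : seq T, ~~ dicycle e (~: F) c.

Definition min_fvs (T : finType) (e : rel T) (F : {set T}) : Prop :=
  is_fvs e F /\ forall F' : {set T}, is_fvs e F' -> #|F| <= #|F'|.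

Definition is_fvn (T : finType) (e : rel T) (k : nat) : Prop :=
  (exists F : {set T}, is_fvs e F /\ #|F| = k) /\
  (forall F : {set T}, is_fvs e F -> k <= #|F|).

Definition bad (T : finType) (e : rel T) (R : {set T}) : Prop :=
  forall F : {set T}, min_fvs e F -> ~ (R \subset F).

Definition minimal_bad (T : finType) (e : rel T) (R : {set T}) : Prop :=
  bad e R /\ forall R' : {set T}, R' \proper R -> ~ bad e R'.

(* The extended digraph D': vertices option (option T), where
   r1 := None, r2 := Some None, and Some (Some v) is the old vertex v.
   Arcs: old arcs, (r1,r2), and (v,r1), (r2,v) for v in R. *)
Definition r1 {T : Type} : option (option T) := None.
Definition r2 {T : Type} : option (option T) := Some None.

Definition ext_rel (T : finType) (e : rel T) (R : {set T}) : rel (option (option T)) :=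
  fun x y =>
    match x, y with
    | Some (Some u), Some (Some v) => e u v
    | None, Some None => true
    | Some (Some v), None => v \in R
    | Some None, Some (Some v) => v \in R
    | _, _ => false
    end.

From mathcomp Require Import all_boot zify.
From Stdlib Require Import Classical Lia.
Set Implicit Arguments. Unset Strict Implicit.

(** The pair r1 -> r2 is a bottleneck: r1 only leads to r2 and r2 is only
    entered from r1, so a directed cycle of D' meets both new vertices or
    neither.  Hence deleting one of them together with a minimum feedback vertex
    set of D destroys every cycle, and f(D') <= f(D) + 1.  Conversely a feedback
    vertex set F' of D' restricts to one of D; if F' avoids r1 and r2 and had
    only f(D) vertices, its restriction would be a minimum feedback vertex set
    of D, which misses some v of the bad set R, leaving the cycle r1 r2 v.  So
    f(D') = f(D) + 1, no minimum feedback vertex set of D' contains both r1 and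
    r2, and each of r1, r2 alone lies in one. *)

Lemma exists_min_card (A : finType) (P : {set A} -> Prop) (X : {set A}) :
  P X -> exists2 Y, P Y & forall Z, P Z -> #|Y| <= #|Z|.
Proof.
move Xn : #|X| => n; elim/ltn_ind: n X Xn => n IH X Xn PX.
have [[Z PZ ltZX] | noSmaller] := classic (exists2 Z, P Z & #|Z| < #|X|).
  by apply: (IH #|Z|) erefl PZ; rewrite -Xn.
exists X => // Z PZ; rewrite leqNgt; apply/negP => ltZX.
by apply: noSmaller; exists Z.
Qed.

Lemma exists_min_fvs (T : finType) (e : rel T) : exists G, min_fvs e G.
Proof.
have fvsT : is_fvs e [set: T].
  by move=> c; case: c => [|x c]; rewrite /dicycle //= !inE andbF.
by have [G fvsG minG] := exists_min_card fvsT; exists G.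
Qed.

Section Extension.

Variables (T : finType) (e : rel T) (R : {set T}).
Local Notation E := (ext_rel e R).

Definition old (v : T) : option (option T) := Some (Some v).

Lemma old_inj : injective old.
Proof. by move=> x y [->]. Qed.

Lemma card_ext_set (F : {set option (option T)}) :
  #|F| = (r1 \in F) + (r2 \in F) + #|old @^-1: F|.
Proof.
rewrite (cardsD1 r1) (cardsD1 r2) !inE /= addnA -(card_imset _ old_inj).
congr (_ + _); apply: eq_card => -[[v|]|];
  by rewrite !inE ?(mem_imset _ _ old_inj) ?inE //; apply/esym/imsetP => -[].
Qed.

Lemma card_ext_lift (G : {set T}) r :
  r \in [set r1; r2] -> #|r |: old @: G| = #|G|.+1.
Proof.
move=> r12; have r_notin : r \notin old @: G.
  by move: r12; rewrite !inE => /orP[]/eqP->; apply/imsetP => -[].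
by rewrite cardsU1 r_notin card_imset //; exact: old_inj.
Qed.

Lemma map_old_notin_r12 (c : seq (option (option T))) :
  r1 \notin c -> r2 \notin c -> exists c0, c = map old c0.
Proof.
elim: c => [|x c IH]; first by exists [::].
rewrite !inE !negb_or => /andP[x_r1 c_r1] /andP[x_r2 c_r2].
have [c0 ->] := IH c_r1 c_r2.
by case: x x_r1 x_r2 => [[v|]|] // _ _; exists (v :: c0).
Qed.

Lemma dicycle_ext_map_old (S : {set option (option T)}) c :
  dicycle E S (map old c) = dicycle e (old @^-1: S) c.
Proof.
rewrite /dicycle map_inj_uniq ?all_map ?cycle_map; last exact: old_inj.
case: c => // x c; congr [&& _, _, _ & _].
by apply: (eq_all (a1 := [preim old of S])) => y; rewrite !inE.
Qed.

Lemma dicycle_ext_r1_r2 S c : dicycle E S c -> (r1 \in c) = (r2 \in c).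
Proof.
case/and4P => _ _ _ cyc; apply/idP/idP => [c_r1 | c_r2].
  have := mem_next c r1; rewrite c_r1.
  by case: (next c r1) (next_cycle cyc c_r1) => [[v|]|].
have := mem_prev c r2; rewrite c_r2.
by case: (prev c r2) (prev_cycle cyc c_r2) => [[v|]|].
Qed.

Lemma is_fvs_ext_preim (F : {set option (option T)}) :
  is_fvs E F -> is_fvs e (old @^-1: F).
Proof. by move=> fvsF c; rewrite -preimsetC -dicycle_ext_map_old. Qed.

Lemma is_fvs_ext_lift (G : {set T}) r :
  is_fvs e G -> r \in [set r1; r2] -> is_fvs E (r |: old @: G).
Proof.
move=> fvsG r12 c; apply/negP => cyc.
have r_notin_c : r \notin c.
  apply/negP => c_r; case/and4P: cyc => _ _ /allP/(_ r c_r).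
  by rewrite !inE eqxx.
have [c_r1 c_r2] : r1 \notin c /\ r2 \notin c.
  move: r12 r_notin_c; rewrite !inE => /orP[]/eqP->;
  by rewrite (dicycle_ext_r1_r2 cyc) => c_r2.
have [c0 def_c] := map_old_notin_r12 c_r1 c_r2.
have preim_lift : old @^-1: (~: (r |: old @: G)) = ~: G.
  apply/setP => v; rewrite !inE (mem_imset _ _ old_inj).
  by move: r12; rewrite !inE => /orP[]/eqP->.
by move: cyc; rewrite def_c dicycle_ext_map_old preim_lift (negbTE (fvsG c0)).
Qed.

Lemma min_fvs_card_lt_ext (G : {set T}) (F : {set option (option T)}) :
  min_fvs e G -> bad e R -> is_fvs E F -> #|G| < #|F|.
Proof.
move=> [fvsG minG] badR fvsF.
have fvs_pre := is_fvs_ext_preim fvsF.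
have le_pre := minG _ fvs_pre.
rewrite card_ext_set.
case r1F: (r1 \in F); first lia.
case r2F: (r2 \in F); first lia.
rewrite ltnNge; apply/negP => le_G.
have min_pre : min_fvs e (old @^-1: F).
  by split=> // F' fvsF'; apply: leq_trans le_G (minG _ fvsF').
have /negP/subsetPn[v vR v_pre] := badR _ min_pre.
apply/negP: (fvsF [:: r1; r2; old v]).
by move: v_pre; rewrite /dicycle /= !inE r1F r2F vR => ->.
Qed.

Section BadSet.

Variables (G : {set T}).
Hypotheses (minG : min_fvs e G) (badR : bad e R).

Let r1_r12 : (r1 : option (option T)) \in [set r1; r2] := setU11 _ _.

Lemma min_fvs_ext_lift r : r \in [set r1; r2] -> min_fvs E (r |: old @: G).
Proof.
move=> r12; split=> [|F fvsF]; first exact: is_fvs_ext_lift minG.1 r12.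
by rewrite (card_ext_lift G r12); apply: min_fvs_card_lt_ext.
Qed.

Lemma is_fvn_ext : is_fvn E #|G|.+1.
Proof.
split=> [|F]; last exact: min_fvs_card_lt_ext.
exists (r1 |: old @: G); split; first exact: (min_fvs_ext_lift r1_r12).1.
exact: card_ext_lift.
Qed.

Lemma bad_ext_r12 : bad E [set r1; r2].
Proof.
move=> F [fvsF minF] /subsetP r12F.
have := minF _ (min_fvs_ext_lift r1_r12).1.
have := minG.2 _ (is_fvs_ext_preim fvsF).
rewrite card_ext_set (card_ext_lift G r1_r12) !r12F ?inE ?eqxx ?orbT //.
lia.
Qed.

End BadSet.

End Extension.

Lemma proper_set2_sub1 (A : finType) (a b : A) (X : {set A}) :
  X \proper [set a; b] -> exists2 r, r \in [set a; b] & X \subset [set r].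
Proof.
case/properP => /subsetP sXab [x x_ab x_X].
have sX y : y \in X -> y \in [set a; b] :\ x.
  by move=> yX; rewrite in_setD1 sXab // andbT; apply: contraNneq x_X => <-.
move: x_ab; rewrite !inE => /orP[]/eqP def_x; [exists b | exists a];
  rewrite ?inE ?eqxx ?orbT //; apply/subsetP => y /sX;
  by rewrite !inE def_x; case: (y =P a); case: (y =P b).
Qed.

Theorem mainTheorem15 (T : finType) (e : rel T) (R : {set T}) :
  oriented e -> minimal_bad e R ->
  nverts (ext_rel e R) = nverts e + 2 /\
  (forall k : nat, is_fvn e k -> is_fvn (ext_rel e R) k.+1) /\
  minimal_bad (ext_rel e R) [set r1; r2].
Proof.
move=> _ [badR _].
have [G minG] := exists_min_fvs e.
split; first by rewrite /nverts !card_option addn2.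
split.
  by move=> k [[F [fvsF <-]] minF]; exact: is_fvn_ext (conj fvsF minF) badR.
split; first exact: bad_ext_r12 minG badR.
move=> R' /proper_set2_sub1[r r12 sR'r] badR'.
apply: (badR' _ (min_fvs_ext_lift minG badR r12)).
by apply: subset_trans sR'r _; rewrite sub1set setU11.
Qed.
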